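(* Let $M\in SL(N,\mathbb Z)$ be a matrix of type $\mathcal J$ with characteristic polynomial $C=B_0B_1\cdots B_k$ as in the definition of type $\mathcal J$. Then any primary Dirichlet family $\mathcal D$ for $M$ is special, i.e. the subgroup of $SL(N,\mathbb Z)$ generated by the matrices $D(M^\top)$, $D\in\mathcal D$, contains at least one matrix without eigenvalue $1$.
   Context: An integer polynomial $C$ is of type $\mathcal J$ if $C=B_0B_1\cdots B_k$ with $k\ge1$, $B_i\in\mathbb Z[t]$: $B_0$ has no real roots; each $B_i$ ($i\ge1$) is irreducible with at least one real root and at least one non-real root; for $i\ne j$, $(B_i)+(B_j)=\mathbb Z[t]$. $M$ is of type $\mathcal J$ if its characteristic polynomial is. Let $\alpha_1,\dots,\alpha_s$ be the real eigenvalues of $M$, and $\alpha_{j,1},\dots,\alpha_{j,s_j}$ the real roots of $B_j$. A Dirichlet family for $M$ is a family of $s$ polynomials $D_1,\dots,D_s\in\mathbb Z[t]$ with $D_i(M)\in SL(N,\mathbb Z)$, $D_i(\alpha_j)>0$ for all $i,j$, and the vectors $(\log D_i(\alpha_1),\dots,\log D_i(\alpha_s))$ forming a basis of $\mathbb R^s$. It is primary (w.r.t. the factorization) if it is indexed as $(D_{j,i})_{1\le j\le k,1\le i\le s_j}$ and there are $P_{j,i}\in\mathbb Z[t]$, invertible in $\mathbb Z[t]/(B_j)$, with $P_{j,i}(\alpha_{j,l})>0$ for all $i,l$ and the vectors $(\log P_{j,i}(\alpha_{j,1}),\dots,\log P_{j,i}(\alpha_{j,s_j}))$, $1\le i\le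 s_j$, a basis of $\mathbb R^{s_j}$, such that $D_{j,i}\equiv t\bmod B_0$, $D_{j,i}\equiv P_{j,i}\bmod B_j$, and $D_{j,i}\equiv1\bmod B_\mu$ for $\mu\notin\{0,j\}$. *)

From HB Require Import structures.
From mathcomp Require Import all_boot all_order all_algebra.
From mathcomp Require Import all_classical all_reals exp.
From mathcomp Require Import complex.

Set Implicit Arguments.
Unset Strict Implicit.
Unset Printing Implicit Defensive.

Import Order.TTheory GRing.Theory Num.Theory.
Local Open Scope ring_scope.

Definition polyZ (T : nzRingType) (p : {poly int}) : {poly T} :=
  map_poly (fun z : int => z%:~R) p.

Definition irreducible_Zt (B : {poly int}) : Prop :=
  B != 0 /\ B \isn't a GRing.unit /\
  (forall p q : {poly int}, B = p * q -> p \is a GRing.unit \/ q \is a GRing.unit).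

Definition comaximal_Zt (B1 B2 : {poly int}) : Prop :=
  exists u v : {poly int}, u * B1 + v * B2 = 1.

Definition congr_Zt (B p q : {poly int}) : Prop :=
  exists r : {poly int}, p - q = r * B.

Definition unit_mod_Zt (B p : {poly int}) : Prop :=
  exists u : {poly int}, congr_Zt B (u * p) 1.

Inductive gen_subgroup (n : nat) (S : 'M[int]_n -> Prop) : 'M[int]_n -> Prop :=
| gen_base A : S A -> gen_subgroup S A
| gen_one : gen_subgroup S 1%:M
| gen_mul A B : gen_subgroup S A -> gen_subgroup S B -> gen_subgroup S (A *m B)
| gen_inv A : gen_subgroup S A -> gen_subgroup S (invmx A).

Definition has_eigenvalue_one (R : realType) (n : nat) (A : 'M[int]_n) : bool :=
  eigenvalue (map_mx (fun z : int => z%:~R : R[i]) A) 1.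

Definition enum_real_roots (R : realType) (p : {poly int}) (s : nat)
  (alpha : 'I_s -> R) : Prop :=
  injective alpha /\ (forall x : R, root (polyZ R p) x <-> exists l, x = alpha l).

Definition enum_real_eigenvalues (R : realType) (n : nat) (M : 'M[int]_n)
  (s : nat) (alpha : 'I_s -> R) : Prop :=
  injective alpha /\
  (forall x : R, eigenvalue (map_mx (fun z : int => z%:~R : R) M) x <-> exists l, x = alpha l).

(* Type J factorization C = B0 * prod_{j<k} B j (B j stands for B_{j+1}). *)
Definition type_J_factorization (R : realType) (C B0 : {poly int}) (k : nat)
  (B : 'I_k -> {poly int}) : Prop :=
  [/\ (1 <= k)%N,
      C = B0 * \prod_(j < k) B j,
      (forall x : R, ~~ root (polyZ R B0) x),
      (forall j, [/\ irreducible_Zt (B j),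
                    (exists x : R, root (polyZ R (B j)) x) &
                    (exists z : R[i], root (polyZ R[i] (B j)) z /\ complex.Im z != 0)]) &
      (forall j, comaximal_Zt B0 (B j)) /\
      (forall i j, i != j -> comaximal_Zt (B i) (B j))].

Definition dirichlet_family (R : realType) (n : nat) (M : 'M[int]_n.+1)
  (s : nat) (alpha : 'I_s -> R) (I : finType) (D : I -> {poly int}) : Prop :=
  [/\ (forall i, \det (horner_mx M (D i)) = 1),
      (forall i l, 0 < (polyZ R (D i)).[alpha l]) &
      basis_of fullv [seq \row_(l < s) ln ((polyZ R (D i)).[alpha l]) | i : I]].

Definition primary_dirichlet_family (R : realType) (n : nat) (M : 'M[int]_n.+1)
  (s : nat) (alpha : 'I_s -> R)
  (B0 : {poly int}) (k : nat) (B : 'I_k -> {poly int})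
  (sj : 'I_k -> nat) (alphaj : forall j, 'I_(sj j) -> R)
  (D : {j : 'I_k & 'I_(sj j)} -> {poly int}) : Prop :=
  dirichlet_family M alpha D /\
  exists P : {j : 'I_k & 'I_(sj j)} -> {poly int},
    forall j : 'I_k,
      [/\ (forall i : 'I_(sj j), unit_mod_Zt (B j) (P (Tagged _ i))),
          (forall (i l : 'I_(sj j)), 0 < (polyZ R (P (Tagged _ i))).[alphaj j l]),
          basis_of fullv [seq \row_(l < sj j) ln ((polyZ R (P (Tagged _ i))).[alphaj j l])
                         | i : 'I_(sj j)] &
          (forall i : 'I_(sj j),
             [/\ congr_Zt B0 (D (Tagged _ i)) 'X,
                 congr_Zt (B j) (D (Tagged _ i)) (P (Tagged _ i)) &
                 forall mu : 'I_k, mu != j -> congr_Zt (B mu) (D (Tagged _ i)) 1])].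

Definition special (R : realType) (n : nat) (M : 'M[int]_n.+1) (I : finType)
  (D : I -> {poly int}) : Prop :=
  exists2 A, gen_subgroup (fun X => exists i, X = horner_mx M^T (D i)) A
           & ~~ has_eigenvalue_one R A.

From HB Require Import structures.
From mathcomp Require Import all_boot all_order all_algebra.
From mathcomp Require Import all_classical all_reals exp.
From mathcomp Require Import complex.

(* Choose one member d_j of the family in each block j and a block j0, and
   take A := (prod_{j <> j0} d_j(M^T)) * d_{j0}(M^T)^-k in the generated group.
   If A had eigenvalue 1, then Q := prod_{j <> j0} d_j - d_{j0}^k would vanish at
   a root z of C.  At a root of B_0 every d_j takes the value z, so
   Q(z) = z^(k-1) (1 - z), which is nonzero since 0 and 1 are real.  At a root of
   B_j1 every d_j with j <> j1 takes the value 1 and d_j1 the value P_j1(z), so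
   P_j1(z)^m = 1 for some m > 0.  As B_j1 is irreducible it then divides
   P_j1^m - 1, hence P_j1 = 1 at every real root of B_j1: the logarithm vector of
   P_j1 vanishes, contradicting that these vectors form a basis. *)

Set Implicit Arguments.
Unset Strict Implicit.
Unset Printing Implicit Defensive.

Import Order.TTheory GRing.Theory Num.Theory.
Local Open Scope ring_scope.

Lemma size_polyZ (T : numDomainType) (p : {poly int}) : size (polyZ T p) = size p.
Proof. exact/size_map_inj_poly/mulr0z/intr_inj. Qed.

Lemma polyZ_ratr (T : numFieldType) (p : {poly int}) :
  polyZ T p = map_poly ratr (polyZ rat p).
Proof. by rewrite /polyZ -map_poly_comp; apply: eq_map_poly => z /=; rewrite ratr_int. Qed.

Lemma dvdp_polyZ (T : numFieldType) (p q : {poly int}) :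
  (polyZ T p %| polyZ T q) = (polyZ rat p %| polyZ rat q).
Proof. by rewrite !(polyZ_ratr T) dvdp_map. Qed.

Lemma root_polyZ_intr (T : numDomainType) (p : {poly int}) (c : int) :
  root (polyZ T p) c%:~R = root p c.
Proof. by rewrite /root /polyZ (horner_map (intr : {rmorphism int -> T})) intr_eq0. Qed.

Lemma horner_polyZ_exp_sub1 (T : comNzRingType) (p : {poly int}) m (x : T) :
  (polyZ T (p ^+ m - 1)).[x] = (polyZ T p).[x] ^+ m - 1.
Proof. by rewrite /polyZ rmorphB rmorphXn rmorph1 /= hornerD hornerN horner_exp hornerC. Qed.

Lemma congr_Zt_horner (T : comNzRingType) (B p q : {poly int}) (x : T) :
  congr_Zt B p q -> root (polyZ T B) x -> (polyZ T p).[x] = (polyZ T q).[x].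
Proof.
move=> [r /(congr1 (fun p => (polyZ T p).[x]))] + Bx.
rewrite /polyZ /= rmorphB rmorphM /= hornerD hornerN hornerM (rootP Bx) mulr0.
by move/eqP; rewrite subr_eq0 => /eqP.
Qed.

Lemma root_polyZ_mul_prod (T : idomainType) (p : {poly int}) k
    (q : 'I_k -> {poly int}) (x : T) :
  root (polyZ T (p * \prod_(j < k) q j)) x ->
  root (polyZ T p) x \/ exists j, root (polyZ T (q j)) x.
Proof.
rewrite /root /polyZ rmorphM rmorph_prod /= hornerM horner_prod mulf_eq0.
by case/orP => [|/prodf_eq0 [j _]]; [left | right; exists j].
Qed.

Lemma polyZ_no_real_root_neq (R : realType) (B : {poly int}) (z : R[i]) (c : int) :
  (forall x : R, ~~ root (polyZ R B) x) -> root (polyZ R[i] B) z -> z != c%:~R.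
Proof.
move=> B_no_real_root Bz; apply: contraTneq Bz => ->.
by rewrite root_polyZ_intr -(root_polyZ_intr R).
Qed.

Lemma irreducible_Zt_rat (B : {poly int}) :
  irreducible_Zt B -> (1 < size B)%N -> irreducible_poly (polyZ rat B).
Proof.
move=> [_ [B_nunit B_irr]] B_gt1; apply/irreducible_rat_int; split=> // q q_neq1.
rewrite -dvdp_rat_int => /dvdpP_rat_int [q1 [a a_neq0 qE] [r Be]].
have [q1_unit|r_unit] := B_irr _ _ Be.
  move: q_neq1; rewrite -(size_rat_int_poly q) qE size_scale // size_rat_int_poly.
  by move: q1_unit; rewrite poly_unitE => /andP[/eqP ->].
move: r_unit; rewrite poly_unitE => /andP[/eqP r_size r_unit].
rewrite /eqp -!dvdp_rat_int -/(_ %= _) qE Be rmorphM /=.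
rewrite (size1_polyC (eq_leq r_size)) map_polyC /= mulrC mul_polyC.
apply: eqp_trans (eqp_scale _ a_neq0) _; rewrite eqp_sym; apply/eqp_scale.
by rewrite intr_eq0; apply: contraTneq r_unit => ->.
Qed.

Lemma irreducible_dvdp_common_root (F L : fieldType) (f : {rmorphism F -> L})
    (p q : {poly F}) (z : L) :
  irreducible_poly p -> root (map_poly f p) z -> root (map_poly f q) z -> p %| q.
Proof.
move=> p_irr pz qz.
have gz : root (map_poly f (gcdp p q)) z by rewrite gcdp_map root_gcd pz qz.
have g_neq1 : size (gcdp p q) != 1.
  apply: contraTneq gz => /eqP/size_poly1P [c c_neq0 ->].
  by rewrite map_polyC rootC fmorph_eq0.
by rewrite -(eqp_dvdl _ (p_irr.2 _ g_neq1 (dvdp_gcdl _ _))) dvdp_gcdr.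
Qed.

Lemma horner_mx_trmx (T : comNzRingType) n (M : 'M[T]_n.+1) (p : {poly T}) :
  horner_mx M^T p = (horner_mx M p)^T.
Proof.
elim/poly_ind: p => [|p c IHp]; first by rewrite !rmorph0 trmx0.
rewrite !rmorphD !rmorphM /= !horner_mx_X !horner_mx_C IHp linearD /= tr_scalar_mx.
have commM : horner_mx M p * M = M * horner_mx M p.
  by have := comm_horner_mx2 M p 'X; rewrite horner_mx_X.
by rewrite commM -!mulmxE trmx_mul.
Qed.

Lemma char_poly_trmx (T : comNzRingType) n (M : 'M[T]_n) : char_poly M^T = char_poly M.
Proof.
rewrite /char_poly -det_tr /char_poly_mx linearB /= tr_scalar_mx.
by rewrite -map_trmx trmxK.
Qed.

Lemma horner_mx_unit_coprime (K : fieldType) n (N : 'M[K]_n.+1) (p : {poly K}) :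
  coprimep (char_poly N) p -> horner_mx N p \in unitmx.
Proof.
case/Bezout_eq1_coprimepP => [[u v] /= /(congr1 (horner_mx N))].
rewrite rmorphD !rmorphM /= Cayley_Hamilton mulr0 add0r rmorph1 -mulmxE.
by case/mulmx1_unit.
Qed.

Lemma horner_mx_nonunit_common_root (F : closedFieldType) n (N : 'M[F]_n.+1)
    (p : {poly F}) :
  horner_mx N p \notin unitmx -> exists2 z, root (char_poly N) z & root p z.
Proof.
move/(contra (@horner_mx_unit_coprime _ _ N p)); rewrite /coprimep.
by case/closed_rootP => z; rewrite root_gcd => /andP[]; exists z.
Qed.

Lemma eigenvalue1_mulmx_subr (F : fieldType) n (A Y : 'M[F]_n) :
  eigenvalue A 1 -> A *m Y - Y \notin unitmx.
Proof.
rewrite /eigenvalue /eigenspace kermx_eq0 row_free_unit => A1_nunit.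
by rewrite -{2}[Y]mul1mx -mulmxBl unitmx_mul negb_and A1_nunit.
Qed.

Lemma has_eigenvalue_one_common_root (R : realType) n (N A Y : 'M[int]_n.+1)
    (Q : {poly int}) :
  A *m Y - Y = horner_mx N Q -> has_eigenvalue_one R A ->
  exists2 z : R[i], root (polyZ R[i] (char_poly N)) z & root (polyZ R[i] Q) z.
Proof.
move=> AY_Q /(eigenvalue1_mulmx_subr (map_mx (fun z : int => z%:~R : R[i]) Y)).
rewrite -map_mxM -map_mxB AY_Q map_horner_mx.
by case/horner_mx_nonunit_common_root => z; rewrite -map_char_poly; exists z.
Qed.

Lemma gen_subgroupX n (S : 'M[int]_n -> Prop) (A : 'M[int]_n) m :
  gen_subgroup S A -> gen_subgroup S (A ^+ m).
Proof.
move=> SA; elim: m => [|m IHm]; first exact: gen_one.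
by rewrite exprS; apply: gen_mul.
Qed.

Lemma gen_subgroup_prod n (S : 'M[int]_n -> Prop) (I : finType) (P : pred I)
    (F : I -> 'M[int]_n) :
  (forall i, P i -> gen_subgroup S (F i)) -> gen_subgroup S (\prod_(i | P i) F i).
Proof. by move=> SF; apply: big_ind => //; [exact: gen_one | exact: gen_mul]. Qed.

Lemma prod_neq_exp_const (F : idomainType) k (j0 : 'I_k) (e : 'I_k -> F) (x : F) :
  (forall j, e j = x) -> x != 0 -> x != 1 -> \prod_(j | j != j0) e j != e j0 ^+ k.
Proof.
move=> ex x_neq0 x_neq1; apply/eqP => prod_e.
have : \prod_(j < k) e j = x ^+ k.
  by rewrite (eq_bigr _ (fun j _ => ex j)) prodr_const card_ord.
rewrite (bigD1 j0) //= prod_e ex => /eqP.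
rewrite -subr_eq0 -{2}[x ^+ k]mul1r -mulrBl mulf_eq0 expf_eq0 !subr_eq0.
by rewrite (negPf x_neq1) (negPf x_neq0) andbF.
Qed.

Lemma prod_eq_exp_root_unity (F : comNzRingType) k (j0 j1 : 'I_k) (e : 'I_k -> F) :
  (forall j, j != j1 -> e j = 1) -> \prod_(j | j != j0) e j = e j0 ^+ k ->
  exists2 m, (0 < m)%N & e j1 ^+ m = 1.
Proof.
move=> e1; case: (eqVneq j1 j0) => [<-|j10] prod_e.
  exists k; first exact: leq_ltn_trans (leq0n j1) (ltn_ord j1).
  by rewrite -prod_e; apply: big1.
exists 1%N => //; move: prod_e.
rewrite (bigD1 j1) //= big1 => [|j /andP[_]]; last exact: e1.
by rewrite mulr1 expr1 (e1 j0) 1?eq_sym // expr1n.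
Qed.

Lemma free_log_rows_exp_neq1 (R : realType) (B : {poly int}) s (a : 'I_s -> R)
    (P : 'I_s -> {poly int}) (i : 'I_s) (z : R[i]) m :
  irreducible_Zt B -> enum_real_roots B a ->
  (forall l, 0 < (polyZ R (P i)).[a l]) ->
  free [seq \row_(l < s) ln ((polyZ R (P i')).[a l]) | i' : 'I_s] ->
  root (polyZ R[i] B) z -> (0 < m)%N -> (polyZ R[i] (P i)).[z] ^+ m != 1.
Proof.
move=> B_irr [_ a_roots] Pi_gt0 P_free Bz m_gt0; apply/eqP => Pz.
have Ba l : root (polyZ R B) (a l) by apply/a_roots; exists l.
have B_gt1 : (1 < size B)%N.
  rewrite -(size_polyZ R); apply: root_size_gt1 (Ba i).
  by rewrite -size_poly_eq0 size_polyZ size_poly_eq0; case: B_irr.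
have B_dvd : polyZ R B %| polyZ R (P i ^+ m - 1).
  rewrite dvdp_polyZ.
  have Brat_irr := irreducible_Zt_rat B_irr B_gt1.
  apply: (@irreducible_dvdp_common_root _ _ ratr _ _ z Brat_irr).
    by rewrite -polyZ_ratr.
  by rewrite -polyZ_ratr /root horner_polyZ_exp_sub1 Pz subrr.
have Pa1 l : (polyZ R (P i)).[a l] = 1.
  have /rootP := root_dvdp B_dvd (Ba l); rewrite horner_polyZ_exp_sub1 => /eqP.
  by rewrite subr_eq0 pexpr_eq1 ?(ltW (Pi_gt0 l)) -?lt0n // => /eqP.
have : 0 \in [seq \row_(l < s) ln ((polyZ R (P i')).[a l]) | i' : 'I_s].
  apply/mapP; exists i; first by rewrite mem_enum.
  by apply/rowP => l; rewrite !mxE Pa1 ln1.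
by move/(free_not0 P_free); rewrite eqxx.
Qed.

Section NoCommonRoot.

Variables (R : realType) (B0 : {poly int}) (k : nat) (j0 : 'I_k).
Variables B d P : 'I_k -> {poly int}.
Hypothesis B0_no_real_root : forall x : R, ~~ root (polyZ R B0) x.
Hypothesis d_B0 : forall j, congr_Zt B0 (d j) 'X.
Hypothesis d_B : forall j, congr_Zt (B j) (d j) (P j).
Hypothesis d_B_other : forall j mu, mu != j -> congr_Zt (B mu) (d j) 1.
Hypothesis P_exp_neq1 : forall j (z : R[i]) m,
  root (polyZ R[i] (B j)) z -> (0 < m)%N -> (polyZ R[i] (P j)).[z] ^+ m != 1.

Let Q := \prod_(j | j != j0) d j - d j0 ^+ k.

Let horner_Q (z : R[i]) : (polyZ R[i] Q).[z] =
  \prod_(j | j != j0) (polyZ R[i] (d j)).[z] - (polyZ R[i] (d j0)).[z] ^+ k.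
Proof.
by rewrite /polyZ rmorphB rmorph_prod rmorphXn /= hornerD hornerN horner_exp horner_prod.
Qed.

Lemma nonroot_of_root_B0 (z : R[i]) : root (polyZ R[i] B0) z -> ~~ root (polyZ R[i] Q) z.
Proof.
move=> B0z; rewrite /root horner_Q subr_eq0.
apply: (@prod_neq_exp_const _ _ j0 _ z) => [j||].
- by rewrite (congr_Zt_horner (d_B0 j) B0z) /polyZ map_polyX hornerX.
- by rewrite -(mulr0z 1); exact: polyZ_no_real_root_neq.
- by rewrite -(mulr1z 1); exact: polyZ_no_real_root_neq.
Qed.

Lemma nonroot_of_root_B j1 (z : R[i]) :
  root (polyZ R[i] (B j1)) z -> ~~ root (polyZ R[i] Q) z.
Proof.
move=> Bz; rewrite /root horner_Q subr_eq0; apply/negP => /eqP.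
case/(prod_eq_exp_root_unity (j1 := j1)) => [j j_neq|m m_gt0].
  have j1_neq : j1 != j by rewrite eq_sym.
  by rewrite (congr_Zt_horner (d_B_other j1_neq) Bz) /polyZ rmorph1 hornerC.
by rewrite (congr_Zt_horner (d_B j1) Bz) => /eqP; apply/negP/P_exp_neq1.
Qed.

Lemma nonroot_of_root_factors (z : R[i]) :
  root (polyZ R[i] (B0 * \prod_(j < k) B j)) z -> ~~ root (polyZ R[i] Q) z.
Proof.
by case/root_polyZ_mul_prod => [|[j]]; [apply: nonroot_of_root_B0 | apply: nonroot_of_root_B].
Qed.

End NoCommonRoot.

Unset Implicit Arguments.

Theorem proposition6p12 (R : realType) (n : nat) (M : 'M[int]_n.+1)
  (hM : \det M = 1)
  (B0 : {poly int}) (k : nat) (B : 'I_k -> {poly int})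
  (hJ : type_J_factorization R (char_poly M) B0 B)
  (s : nat) (alpha : 'I_s -> R) (halpha : enum_real_eigenvalues M alpha)
  (sj : 'I_k -> nat) (alphaj : forall j, 'I_(sj j) -> R)
  (halphaj : forall j, enum_real_roots (B j) (alphaj j))
  (D : {j : 'I_k & 'I_(sj j)} -> {poly int})
  (hD : primary_dirichlet_family M alpha B0 B alphaj D) :
  special R M D.
Proof.
case: hJ => k_gt0 charM B0_no_real_root B_props _.
case: hD => [[detD _ _] [P hP]].
have sj_gt0 j : (0 < sj j)%N.
  have [_ [x Bx] _] := B_props j; have [l _] := ((halphaj j).2 x).1 Bx.
  exact: leq_ltn_trans (leq0n l) (ltn_ord l).
pose t j := Tagged (fun j => 'I_(sj j)) (Ordinal (sj_gt0 j)).
pose j0 := Ordinal k_gt0.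
pose H j := horner_mx M^T (D (t j)).
have H_gen j : gen_subgroup (fun X => exists i, X = horner_mx M^T (D i)) (H j).
  by apply: gen_base; exists (t j).
have H_unit : H j0 ^+ k \in unitmx.
  by apply: unitrX; rewrite unitmxE /H horner_mx_trmx det_tr detD unitr1.
exists (\prod_(j | j != j0) H j * invmx (H j0 ^+ k)).
  by apply: gen_mul; [apply: gen_subgroup_prod | apply/gen_inv/gen_subgroupX].
apply/negP => eig1.
have [|z] := @has_eigenvalue_one_common_root R n M^T _ (H j0 ^+ k)
  (\prod_(j | j != j0) D (t j) - D (t j0) ^+ k) _ eig1.
  by rewrite -mulmxE mulmxKV // rmorphB rmorph_prod rmorphXn.
rewrite char_poly_trmx charM => Cz; apply/negP.
apply: (@nonroot_of_root_factors _ _ _ _ _ (fun j => D (t j)) (fun j => P (t j))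
  _ _ _ _ _ _ Cz) => // [j|j|j mu mu_neq|j w m Bw m_gt0].
- by have [_ _ _ /(_ (Ordinal (sj_gt0 j))) []] := hP j.
- by have [_ _ _ /(_ (Ordinal (sj_gt0 j))) []] := hP j.
- by have [_ _ _ /(_ (Ordinal (sj_gt0 j))) [_ _ /(_ mu mu_neq)]] := hP j.
- have [_ P_gt0 P_basis _] := hP j; have [B_irr _ _] := B_props j.
  exact: free_log_rows_exp_neq1 B_irr (halphaj j) (P_gt0 _) (basis_free P_basis) Bw
    m_gt0.
Qed.
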